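(* Let $p$ be a probability density on $\mathbb{R}^d$ that is log-concave, strictly positive on $\mathbb{R}^d$, and three times differentiable with $\sup_x\|\nabla^3\ln p(x)\|_F<\infty$. Let $\tau>0$, $y\in\mathbb{R}^d$, $F(x):=\tfrac12\|y-x\|^2-\tau\ln p(x)$ and, for $\sigma>0$, $F_\sigma(x):=\tfrac12\|y-x\|^2-\tau\ln p_\sigma(x)$. Let $\mathrm{prox}_{-\tau\ln p}(y):=\arg\min F$ and $\mathrm{prox}_{-\tau\ln p_\sigma}(y):=\arg\min F_\sigma$. Then $\mathrm{prox}_{-\tau\ln p_\sigma}(y)\to\mathrm{prox}_{-\tau\ln p}(y)$ as $\sigma\to0$.
   Context: For $\sigma>0$, $p_\sigma$ denotes the density of $X+\sigma\varepsilon$ where $X\sim p$ and $\varepsilon\sim\mathcal N(0,I_d)$ are independent. For a tensor $A\in\mathbb{R}^{d\times d\times d}$, $\|A\|_F=(\sum_{i,j,k}A_{ijk}^2)^{1/2}$. Both $F$ and $F_\sigma$ are strongly convex, so the minimisers are unique. *)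

From HB Require Import structures.
From mathcomp Require Import all_boot all_order all_algebra.
From mathcomp Require Import all_classical all_reals all_analysis.
Set Implicit Arguments. Unset Strict Implicit. Unset Printing Implicit Defensive.
Import Order.TTheory GRing.Theory Num.Theory.
Import numFieldNormedType.Exports.
Local Open Scope classical_set_scope.
Local Open Scope ring_scope.

Section Defs.
Variable R : realType.

Definition sqnorm d (v : 'rV[R]_d) : R := \sum_(i < d) (v ord0 i) ^+ 2.

Definition ebasis d (i : 'I_d) : 'rV[R]_d := \row_(j < d) (i == j)%:R.

Definition partial d (g : 'rV[R]_d -> R) (i : 'I_d) : 'rV[R]_d -> R :=
  fun x => 'D_(ebasis i) g x.

(** Lebesgue integral over R^d of a nonnegative extended-real function,
    computed as the iterated one-dimensional Lebesgue integral
    (equal to the integral w.r.t. Lebesgue measure on R^d by Tonelli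
    for nonnegative Borel functions). *)
Fixpoint iint (d : nat) : ('rV[R]_d -> \bar R) -> \bar R :=
  match d with
  | 0 => fun f => f 0
  | d'.+1 => fun f =>
      (\int[@lebesgue_measure R]_(t in setT)
         iint (fun v : 'rV[R]_d' => f (row_mx (\row_(j < 1) t) v)))%E
  end.

Definition is_density d (p : 'rV[R]_d -> R) : Prop :=
  (forall x, 0 <= p x) /\ iint (fun x => (p x)%:E) = 1%E.

Definition log_concave d (p : 'rV[R]_d -> R) : Prop :=
  forall (x z : 'rV[R]_d) (t : R), 0 <= t <= 1 ->
    t * ln (p x) + (1 - t) * ln (p z) <= ln (p (t *: x + (1 - t) *: z)).

Definition thrice_differentiable d (g : 'rV[R]_d -> R) : Prop :=
  [/\ forall x, differentiable g x,
      forall i x, differentiable (partial g i) x &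
      forall i j x, differentiable (partial (partial g j) i) x].

Definition third_deriv_frob2 d (g : 'rV[R]_d -> R) (x : 'rV[R]_d) : R :=
  \sum_(i < d) \sum_(j < d) \sum_(k < d)
     (partial (partial (partial g k) j) i x) ^+ 2.

Definition gauss_kernel d (sigma : R) (v : 'rV[R]_d) : R :=
  (Num.sqrt (2 * pi * sigma ^+ 2))^-1 ^+ d * expR (- sqnorm v / (2 * sigma ^+ 2)).

(** p_sigma : density of X + sigma * eps, i.e. convolution of p with the
    Gaussian kernel *)
Definition smoothed d (p : 'rV[R]_d -> R) (sigma : R) (x : 'rV[R]_d) : R :=
  fine (iint (fun z => (p z * gauss_kernel sigma (x - z))%:E)).

Definition prox_obj d (q : 'rV[R]_d -> R) (tau : R) (y x : 'rV[R]_d) : R :=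
  2^-1 * sqnorm (y - x) - tau * ln (q x).

Definition is_argmin d (F : 'rV[R]_d -> R) (x : 'rV[R]_d) : Prop :=
  forall z, F x <= F z.

End Defs.

From HB Require Import structures.
From mathcomp Require Import all_boot all_order all_algebra.
From mathcomp Require Import all_classical all_reals all_analysis.
From mathcomp Require Import ring lra measurable_realfun normal_distribution.
Set Implicit Arguments. Unset Strict Implicit. Unset Printing Implicit Defensive.
Import Order.TTheory GRing.Theory Num.Theory.
Import numFieldNormedType.Exports.
Local Open Scope classical_set_scope.
Local Open Scope ring_scope.

(* Put g := (x0 - y) / tau.  Minimality of x0 along the segments [x0, z],
   together with concavity of ln p, makes g a supergradient of ln p at x0, so
   p z <= p x0 * exp <g, z - x0>; smoothing this exponential bound with the
   Gaussian kernel gives ln p_s x <= ln p x0 + <g, x - x0> + s^2 |g|^2 / 2.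
   Comparing F_s at its minimiser xs with its value at x0 then yields
   |xs - x0|^2 / 2 <= tau (ln p x0 - ln p_s x0) + tau s^2 |g|^2 / 2, and the
   right-hand side vanishes as s -> 0 because p is continuous at x0 and the
   Gaussian concentrates (a Chernoff bound in each coordinate). *)

Section EuclideanAlgebra.
Context {R : realType} {d : nat}.
Implicit Types (u v x : 'rV[R]_d) (t r : R).

Definition dot u v : R := \sum_i u 0 i * v 0 i.

Definition rV_box x r : set 'rV[R]_d :=
  [set z | forall i, z 0 i \in [set` `[x 0 i - r, x 0 i + r]]].

Lemma sqnorm_ge0 v : 0 <= sqnorm v.
Proof. by rewrite sumr_ge0 // => i _; exact: sqr_ge0. Qed.

Lemma sqr_coord_le_sqnorm v i : v 0 i ^+ 2 <= sqnorm v.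
Proof. by rewrite /sqnorm (bigD1 i) //= lerDl sumr_ge0 // => j _; exact: sqr_ge0. Qed.

Lemma sqnormZ t v : sqnorm (t *: v) = t ^+ 2 * sqnorm v.
Proof. by rewrite /sqnorm mulr_sumr; apply: eq_bigr => i _; rewrite !mxE; ring. Qed.

Lemma sqnormB u v : sqnorm (u - v) = sqnorm u - 2 * dot u v + sqnorm v.
Proof.
rewrite /sqnorm /dot mulr_sumr -sumrB -big_split /=.
by apply: eq_bigr => i _; rewrite !mxE; ring.
Qed.

Lemma dotZl t u v : dot (t *: u) v = t * dot u v.
Proof. by rewrite /dot mulr_sumr; apply: eq_bigr => i _; rewrite !mxE; ring. Qed.

Lemma dotZr t u v : dot u (t *: v) = t * dot u v.
Proof. by rewrite /dot mulr_sumr; apply: eq_bigr => i _; rewrite !mxE; ring. Qed.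

Lemma dotNl u v : dot (- u) v = - dot u v.
Proof. by rewrite /dot -sumrN; apply: eq_bigr => i _; rewrite !mxE; ring. Qed.

Lemma rV_norm_lt v (e : R) : 0 < e ->
  (forall i, `|v 0 i| < e) -> `|v| < e.
Proof.
move=> e0 ve; rewrite (_ : `|v| = mx_norm v) // mx_normrE.
by apply: bigmax_lt => // -[i j] _ /=; rewrite (ord1 i).
Qed.

Lemma cvg_rV_sqnorm (F : set_system R) {FF : Filter F} (f : R -> 'rV[R]_d) v :
  (forall e, 0 < e -> \forall s \near F, sqnorm (f s - v) < e) ->
  f s @[s --> F] --> v.
Proof.
move=> near_f; apply/cvgrPdist_lt => e e0.
have e20 : 0 < e ^+ 2 by rewrite exprn_gt0.
near=> s; rewrite -normrN opprB; apply: rV_norm_lt => // i.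
have fs_close : sqnorm (f s - v) < e ^+ 2 by near: s; exact: near_f.
rewrite -[e in _ < e]ger0_norm ?ltW // -!sqrtr_sqr ltr_sqrt //.
exact: le_lt_trans (sqr_coord_le_sqnorm _ i) fs_close.
Unshelve. all: by end_near.
Qed.

End EuclideanAlgebra.

Section NormalDistribution.
Variable R : realType.
Local Notation mu := (@lebesgue_measure R).
Implicit Types (a b r s t : R).

Lemma measurable_expM_normal_pdf s a b :
  measurable_fun setT (fun t => expR (b * (t - a)) * normal_pdf a s t).
Proof.
apply: measurable_funM; last exact: measurable_normal_pdf.
apply: measurableT_comp; first exact: measurable_expR.
by apply: measurable_funM => //; exact: measurable_funB.
Qed.

Lemma measurable_indic_normal_pdf s a r :
  measurable_fun setT (fun t => \1_`[a - r, a + r] t * normal_pdf a s t).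
Proof.
apply: measurable_funM; last exact: measurable_normal_pdf.
exact: measurable_indic.
Qed.

Lemma normal_mgf s a b : s != 0 ->
  (\int[mu]_t (expR (b * (t - a)) * normal_pdf a s t)%:E
    = (expR (b ^+ 2 * s ^+ 2 / 2))%:E)%E.
Proof.
move=> s0.
(* completing the square turns the tilted density into a shifted one *)
transitivity (\int[mu]_t ((expR (b ^+ 2 * s ^+ 2 / 2))%:E *
   (normal_pdf (a + b * s ^+ 2) s t)%:E))%E.
  apply: eq_integral => t _; rewrite -EFinM; congr EFin.
  rewrite !normal_pdfE // /normal_fun mulrCA [RHS]mulrCA; congr (_ * _).
  rewrite -!expRD; congr expR.
  rewrite (_ : t - (a + b * s ^+ 2) = (t - a) - b * s ^+ 2); last by ring.
  by field.
rewrite ge0_integralZl_EFin ?expR_ge0 //.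
- by rewrite integral_normal_pdf mule1.
- by move=> t _; rewrite lee_fin normal_pdf_ge0.
- by apply/measurable_EFinP; exact: measurable_normal_pdf.
Qed.

Lemma indic_itv_ge_chernoff a r c t : 0 <= c ->
  1 <= \1_`[a - r, a + r] t + expR (- (c * r)) *
         (expR (c * (t - a)) + expR (- c * (t - a))).
Proof.
move=> c0; rewrite mulrDr -!expRD indicE.
have [tI|tI] := boolP (t \in [set` `[a - r, a + r]]).
  by rewrite lerDl addr_ge0 ?expR_ge0.
have : t \notin `[a - r, a + r] by apply: contra tI => h; rewrite in_setE.
rewrite add0r in_itv /= negb_and -!ltNge.
case/orP => ta.
- rewrite -[leLHS]add0r lerD ?expR_ge0 // -expR0 ler_expR.
  rewrite (_ : - (c * r) + - c * (t - a) = c * (a - r - t)); last by ring.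
  by rewrite mulr_ge0 // subr_ge0 ltW.
- rewrite -[leLHS]addr0 lerD ?expR_ge0 // -expR0 ler_expR.
  rewrite (_ : - (c * r) + c * (t - a) = c * (t - (a + r))); last by ring.
  by rewrite mulr_ge0 // subr_ge0 ltW.
Qed.

Lemma normal_itv_mass_ge_chernoff s a r : s != 0 -> 0 < r ->
  ((1 - 2 * expR (- r ^+ 2 / (s ^+ 2 *+ 2)))%:E <=
    \int[mu]_t (\1_`[a - r, a + r] t * normal_pdf a s t)%:E)%E.
Proof.
move=> s0 r0.
(* Chernoff bound on both tails, with the optimal tilt c = r / s^2 *)
set c := r / s ^+ 2; set E := expR (- r ^+ 2 / (s ^+ 2 *+ 2)).
have c0 : 0 <= c by rewrite divr_ge0 ?(ltW r0) ?sqr_ge0.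
pose I t := (\1_`[a - r, a + r] t * normal_pdf a s t)%:E.
pose T b t := ((expR (- (c * r)))%:E * (expR (b * (t - a)) * normal_pdf a s t)%:E)%E.
have mI : measurable_fun setT I.
  by apply/measurable_EFinP; exact: measurable_indic_normal_pdf.
have I0 t : setT t -> (0 <= I t)%E by rewrite lee_fin mulr_ge0 ?normal_pdf_ge0.
have mT b : measurable_fun setT (T b).
  apply: emeasurable_funM => //.
  by apply/measurable_EFinP; exact: measurable_expM_normal_pdf.
have T0 b t : setT t -> (0 <= T b t)%E.
  by rewrite mule_ge0 ?lee_fin ?mulr_ge0 ?expR_ge0 ?normal_pdf_ge0.
have intT b : b ^+ 2 = c ^+ 2 -> (\int[mu]_t T b t = E%:E)%E.
  move=> bc; rewrite ge0_integralZl_EFin ?expR_ge0 //; last 2 first.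
  - by move=> t _; rewrite lee_fin mulr_ge0 ?expR_ge0 ?normal_pdf_ge0.
  - by apply/measurable_EFinP; exact: measurable_expM_normal_pdf.
  rewrite normal_mgf // -EFinM bc -expRD /E /c; congr (EFin (expR _)).
  by field.
have bound : (\int[mu]_t (normal_pdf a s t)%:E <=
    \int[mu]_t (I t + (T c t + T (- c)%R t)))%E.
  apply: ge0_le_integral => //.
  - by move=> t _; rewrite lee_fin normal_pdf_ge0.
  - by apply/measurable_EFinP; exact: measurable_normal_pdf.
  - exact: emeasurable_funD mI (emeasurable_funD (mT c) (mT (- c))).
  move=> t _; rewrite /I /T -!EFinM -!EFinD lee_fin !mulrA -!mulrDl.
  rewrite -[leLHS]mul1r ler_wpM2r ?normal_pdf_ge0 // -mulrDr.
  exact: indic_itv_ge_chernoff.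
move: (mT c) (mT (- c)) (T0 c) (T0 (- c)) => mTc mTNc T0c T0Nc.
rewrite integral_normal_pdf !ge0_integralD // in bound; last 2 first.
- by move=> t _; apply: adde_ge0; [exact: T0c | exact: T0Nc].
- exact: emeasurable_funD.
rewrite !intT ?sqrrN // in bound.
by rewrite EFinB leeBlDr // (_ : 2 * E = E + E) ?EFinD //; ring.
Qed.

Lemma normal_itv_mass_ge_width s a r : s != 0 -> 0 < r ->
  ((normal_peak s * expR (- r ^+ 2 / (s ^+ 2 *+ 2)) * (r *+ 2))%:E <=
    \int[mu]_t (\1_`[a - r, a + r] t * normal_pdf a s t)%:E)%E.
Proof.
move=> s0 r0.
set K := normal_peak s * expR (- r ^+ 2 / (s ^+ 2 *+ 2)).
have K0 : 0 <= K by rewrite mulr_ge0 ?normal_peak_ge0 ?expR_ge0.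
have -> : (K * (r *+ 2))%:E = (\int[mu]_t (K%:E * (\1_`[a - r, a + r] t)%:E))%E.
  rewrite ge0_integralZl_EFin //; last first.
    by apply/measurable_EFinP; exact: measurable_indic.
  rewrite integral_indic // setIT.
  have itv_len : mu [set` `[a - r, a + r]] = (r *+ 2)%:E.
    rewrite lebesgue_measure_itv /= lte_fin ifT; last first.
      by rewrite ltrBlDr -addrA ltrDl addr_gt0.
    by congr EFin; rewrite mulr2n; ring.
  by rewrite EFinM; congr (_ * _)%E; exact/esym/itv_len.
apply: ge0_le_integral => //.
- by move=> t _; rewrite -EFinM lee_fin mulr_ge0 // indicE.
- by apply/measurable_EFinP; apply: measurable_funM => //; exact: measurable_indic.
- by apply/measurable_EFinP; exact: measurable_indic_normal_pdf.
move=> t _; rewrite -EFinM lee_fin mulrC indicE.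
have [tI|tI] := boolP (t \in [set` `[a - r, a + r]]); last by rewrite !mul0r.
rewrite !mul1r normal_pdfE // /normal_fun ler_wpM2l ?normal_peak_ge0 //.
rewrite ler_expR !mulNr lerN2 ler_wpM2r ?invr_ge0 ?mulrn_wge0 ?sqr_ge0 //.
move: tI; rewrite in_setE /= in_itv /= => /andP [h1 h2].
rewrite -subr_ge0 (_ : r ^+ 2 - (t - a) ^+ 2 = (r - (t - a)) * (r + (t - a))).
  by rewrite mulr_ge0 // -lerBlDl ?opprB; lra.
by ring.
Qed.

End NormalDistribution.

Section IteratedIntegral.
Variable R : realType.
Local Notation mu := (@lebesgue_measure R).

(* No measurability is required: the integral of a nonnegative function is a
   supremum over its simple minorants.  The integrands produced by [iint] are
   not known to be measurable. *)
Lemma ge0_le_integralT (f g : R -> \bar R) : (forall x, 0 <= f x)%E ->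
  (forall x, f x <= g x)%E -> (\int[mu]_x f x <= \int[mu]_x g x)%E.
Proof.
move=> f0 fg.
have g0 x : (0 <= g x)%E by exact: le_trans (f0 x) (fg x).
rewrite !ge0_integralTE //; apply: ereal_sup_le => _ [h hf <-].
by exists h => //= x; exact: le_trans (hf x) (fg x).
Qed.

Lemma iint_ge0 d (f : 'rV[R]_d -> \bar R) : (forall x, 0 <= f x)%E ->
  (0 <= iint f)%E.
Proof.
elim: d f => [|d IH] f f0 /=; first exact: f0.
by apply: integral_ge0 => t _; exact: IH.
Qed.

Lemma le_iint d (f g : 'rV[R]_d -> \bar R) : (forall x, 0 <= f x)%E ->
  (forall x, f x <= g x)%E -> (iint f <= iint g)%E.
Proof.
elim: d f g => [|d IH] f g f0 fg /=; first exact: fg.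
by apply: ge0_le_integralT => t; [exact: iint_ge0 | exact: IH].
Qed.

Lemma lee_prod d (u v : 'I_d -> \bar R) : (forall i, 0 <= u i)%E ->
  (forall i, u i <= v i)%E -> (\prod_i u i <= \prod_i v i)%E.
Proof.
elim: d u v => [|d IH] u v u0 uv; first by rewrite !big_ord0.
rewrite !big_ord_recl; apply: lee_pmul => //; first exact: prode_ge0.
exact: IH.
Qed.

Lemma row_mx_cons_ord0 d (t : R) (v : 'rV[R]_d) :
  row_mx (\row_(j < 1) t) v 0 ord0 = t.
Proof.
by rewrite (_ : ord0 = lshift d (ord0 : 'I_1)) ?row_mxEl ?mxE //; exact: val_inj.
Qed.

Lemma row_mx_cons_lift d (t : R) (v : 'rV[R]_d) i :
  row_mx (\row_(j < 1) t) v 0 (lift ord0 i) = v 0 i.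
Proof.
by rewrite (_ : lift ord0 i = rshift 1 i) ?row_mxEr //; exact: val_inj.
Qed.

Lemma iint_prod d (c : R) (h : 'I_d -> R -> R) : 0 <= c ->
  (forall i t, 0 <= h i t) -> (forall i, measurable_fun setT (h i)) ->
  iint (fun z : 'rV[R]_d => (c * \prod_i h i (z 0 i))%:E) =
    (c%:E * \prod_i \int[mu]_t (h i t)%:E)%E.
Proof.
elim: d c h => [|d IH] c h c0 h0 mh /=; first by rewrite !big_ord0 mulr1 mule1.
set P := (\prod_(i < d) \int[mu]_t (h (lift ord0 i) t)%:E)%E.
have P0 : (0 <= P)%E.
  by apply: prode_ge0 => i _; apply: integral_ge0 => t _; rewrite lee_fin.
have inner t : iint (fun v : 'rV[R]_d =>
      (c * \prod_i h i (row_mx (\row_(j < 1) t) v 0 i))%:E) =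
    ((h ord0 t)%:E * (c%:E * P))%E.
  rewrite (_ : (fun v => _) = fun v : 'rV[R]_d =>
      ((c * h ord0 t) * \prod_(i < d) h (lift ord0 i) (v 0 i))%:E); last first.
    apply/funext => v; rewrite big_ord_recl row_mx_cons_ord0 mulrA.
    by congr (EFin (_ * _)); apply: eq_bigr => i _; rewrite row_mx_cons_lift.
  by rewrite (IH _ (fun i => h (lift ord0 i))) ?mulr_ge0 // EFinM muleCA -muleA.
transitivity (\int[mu]_t ((h ord0 t)%:E * (c%:E * P)))%E.
  by apply: eq_integral => t _; exact: inner.
rewrite ge0_integralZr //; last 3 first.
- by apply/measurable_EFinP; exact: mh.
- by move=> t _; rewrite lee_fin.
- by rewrite mule_ge0 ?lee_fin.
by rewrite big_ord_recl muleCA.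
Qed.

End IteratedIntegral.

Section Smoothing.
Variable R : realType.
Local Notation mu := (@lebesgue_measure R).

Lemma gauss_kernel_prod d (s : R) (x z : 'rV[R]_d) : s != 0 ->
  gauss_kernel s (x - z) = \prod_i normal_pdf (x 0 i) s (z 0 i).
Proof.
move=> s0; rewrite /gauss_kernel.
under eq_bigr do rewrite normal_pdfE //.
rewrite big_split /= prodr_const card_ord /normal_peak /normal_fun.
congr (_ ^+ _ * _); first by congr (Num.sqrt _)^-1; rewrite mulr2n; ring.
rewrite -expR_sum /sqnorm mulNr mulr_suml -sumrN; congr expR.
by apply: eq_bigr => i _; rewrite !mxE mulr2n; field.
Qed.

Lemma gauss_kernel_ge0 d (s : R) (v : 'rV[R]_d) : 0 <= gauss_kernel s v.
Proof.
by rewrite mulr_ge0 ?expR_ge0 // exprn_ge0 // invr_ge0 sqrtr_ge0.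
Qed.

Lemma iint_gauss_le d (p : 'rV[R]_d -> R) (s K : R) (x w g : 'rV[R]_d) :
  s != 0 -> 0 <= K -> (forall z, 0 <= p z) ->
  (forall z, p z <= K * expR (dot g (z - w))) ->
  (iint (fun z => (p z * gauss_kernel s (x - z))%:E) <=
    (K * expR (dot g (x - w)) * expR (s ^+ 2 * sqnorm g / 2))%:E)%E.
Proof.
move=> s0 K0 p0 pK.
set C := K * expR (dot g (x - w)).
pose h i t := expR (g 0 i * (t - x 0 i)) * normal_pdf (x 0 i) s t.
have h0 i t : 0 <= h i t by rewrite mulr_ge0 ?expR_ge0 ?normal_pdf_ge0.
apply: (@le_trans _ _ (iint (fun z => (C * \prod_i h i (z 0 i))%:E))).
  apply: le_iint => z.
    rewrite lee_fin mulr_ge0 // gauss_kernel_prod // prodr_ge0 // => i _.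
    exact: normal_pdf_ge0.
  rewrite lee_fin gauss_kernel_prod // big_split /= -expR_sum mulrA.
  apply: ler_wpM2r; first by rewrite prodr_ge0 // => i _; exact: normal_pdf_ge0.
  rewrite /C -mulrA -expRD (_ : _ + _ = dot g (z - w)) ?pK // /dot -big_split /=.
  by apply: eq_bigr => i _; rewrite !mxE; ring.
rewrite iint_prod ?mulr_ge0 ?expR_ge0 // => [|i]; last first.
  exact: measurable_expM_normal_pdf.
under eq_bigr do rewrite normal_mgf //.
rewrite prodEFin -EFinM -expR_sum lee_fin /sqnorm mulr_sumr mulr_suml.
by rewrite (eq_bigr (fun i => s ^+ 2 * g 0 i ^+ 2 / 2)) // => i _; ring.
Qed.

Lemma iint_gauss_ge d (p : 'rV[R]_d -> R) (s r th c : R) (x : 'rV[R]_d) :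
  s != 0 -> 0 <= th -> 0 <= c -> (forall z, 0 <= p z) ->
  (forall z, rV_box x r z -> th <= p z) ->
  (forall a, (c%:E <= \int[mu]_t (\1_`[a - r, a + r] t * normal_pdf a s t)%:E)%E) ->
  ((th * c ^+ d)%:E <= iint (fun z => (p z * gauss_kernel s (x - z))%:E))%E.
Proof.
move=> s0 th0 c0 p0 pth hc.
pose h i t := \1_`[x 0 i - r, x 0 i + r] t * normal_pdf (x 0 i) s t.
have h0 i t : 0 <= h i t by rewrite mulr_ge0 ?normal_pdf_ge0.
apply: (@le_trans _ _ (iint (fun z => (th * \prod_i h i (z 0 i))%:E))).
  rewrite iint_prod // => [|i]; last exact: measurable_indic_normal_pdf.
  have -> : c ^+ d = \prod_(i < d) c by rewrite prodr_const card_ord.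
  rewrite EFinM -prodEFin lee_wpmul2l ?lee_fin //.
  by apply: lee_prod => i; [rewrite lee_fin | exact: hc].
apply: le_iint => z; first by rewrite lee_fin mulr_ge0 ?prodr_ge0.
rewrite lee_fin gauss_kernel_prod //.
have [inbox|] := pselect (rV_box x r z).
  rewrite /h; under eq_bigr do rewrite indicE (inbox _) mul1r.
  by rewrite ler_wpM2r ?prodr_ge0 ?pth // => i _; exact: normal_pdf_ge0.
move=> /existsNP [i /negP zi].
rewrite (bigD1 i) //= /h indicE (negbTE zi) !mul0r mulr0.
by rewrite mulr_ge0 ?prodr_ge0 // => j _; exact: normal_pdf_ge0.
Qed.

Lemma continuous_ge_on_box d (p : 'rV[R]_d -> R) (x : 'rV[R]_d) (th : R) :
  {for x, continuous p} -> th < p x ->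
  exists2 r, 0 < r & forall z, rV_box x r z -> th <= p z.
Proof.
move=> px thp.
have := (@cvgrPdist_lt _ _ _ _ _ p (p x)).1 px (p x - th).
rewrite subr_gt0 => /(_ _ thp) /nbhs_normP [e /= e0 near_x].
exists (e / 2); first by rewrite divr_gt0.
move=> z zbox; have : `|p x - p z| < p x - th.
  apply: near_x; rewrite /ball_ /=; apply: rV_norm_lt => // i; rewrite !mxE.
  move: (zbox i); rewrite in_setE /= in_itv /= => /andP [z1 z2].
  by rewrite ltr_norml; apply/andP; split; lra.
by rewrite ltr_norml => /andP [_]; lra.
Qed.

End Smoothing.

Section Prox.
Variable R : realType.

Lemma ler_of_forall_ler_addM (a b c : R) : 0 <= c ->
  (forall t, 0 < t <= 1 -> a <= b + t * c) -> a <= b.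
Proof.
move=> c0 abc; apply/ler_addgt0Pr => e e0.
set t := Num.min 1 (e / (c + 1)).
have t0 : 0 < t by rewrite lt_min ltr01 divr_gt0 // ltr_wpDl.
apply: (le_trans (abc t _)); first by rewrite t0 ge_min lexx.
rewrite lerD2l; apply: (@le_trans _ _ (e / (c + 1) * c)).
  by rewrite ler_wpM2r // ge_min lexx orbT.
by rewrite mulrAC ler_pdivrMr ?ltr_wpDl // ler_pM2l // lerDl.
Qed.

(* First-order optimality for the proximal problem, obtained without any
   differentiability by comparing [x0] with the points of the segment
   [[x0, z]] and letting them tend to [x0]. *)
Lemma prox_log_concave_supergrad d (q : 'rV[R]_d -> R) (tau : R) (y x0 : 'rV[R]_d) :
  0 < tau -> log_concave q -> is_argmin (prox_obj q tau y) x0 ->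
  forall z, ln (q z) <= ln (q x0) + dot (tau^-1 *: (x0 - y)) (z - x0).
Proof.
move=> tau0 lcq x0_min z.
set v := z - x0; set D := dot (x0 - y) v; set Sv := sqnorm v.
suff : tau * (ln (q z) - ln (q x0)) <= D.
  by rewrite dotZl -lerBlDl ler_pdivlMl.
apply: (ler_of_forall_ler_addM (c := Sv / 2)).
  by rewrite divr_ge0 ?sqnorm_ge0.
move=> t /andP [t0 t1].
have := x0_min (t *: z + (1 - t) *: x0); rewrite /prox_obj.
have -> : y - (t *: z + (1 - t) *: x0) = (y - x0) - t *: v.
  by apply/rowP => i; rewrite !mxE; ring.
rewrite (sqnormB (y - x0)) sqnormZ dotZr (_ : dot (y - x0) v = - D); last first.
  by rewrite /D -dotNl opprB.
have := lcq z x0 t; rewrite (ltW t0) t1 => /(_ isT) /(ler_wpM2l (ltW tau0)).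
set Lz := ln (q z); set L0 := ln (q x0); set Lt := ln (q _).
move=> conc opt; rewrite -(ler_pM2l t0).
rewrite -/Sv in opt; lra.
Qed.

End Prox.

Section NearZero.
Variable R : realType.

Lemma gauss_tail_near0 (r q : R) : 0 < r -> 0 < q ->
  \forall s \near 0^'+, 2 * expR (- r ^+ 2 / (s ^+ 2 *+ 2)) <= q.
Proof.
move=> r0 q0; near=> s.
have s0 : 0 < s by near: s; exact: nbhs_right_gt.
have s1 : s < 1 by near: s; exact: nbhs_right_lt.
have sq : s * 4 < q * r ^+ 2.
  by rewrite -ltr_pdivlMr //; near: s; apply: nbhs_right_lt;
    rewrite !mulr_gt0 ?exprn_gt0.
set u := r ^+ 2 / (s ^+ 2 *+ 2).
have u0 : 0 < u by rewrite divr_gt0 ?mulrn_wgt0 ?exprn_gt0.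
have expNu : expR (- u) <= u^-1.
  by rewrite expRN lef_pV2 ?posrE ?expR_gt0 //; have := expR_ge1Dx u; lra.
rewrite mulNr -/u (le_trans (ler_wpM2l _ expNu)) // /u invf_div.
rewrite mulrA ler_pdivrMr ?exprn_gt0 // mulr2n.
have : s ^+ 2 <= s by rewrite expr2 ger_pMl // ltW.
lra.
Unshelve. all: by end_near.
Qed.

Lemma sqr_mul_le_near0 (a b : R) : 0 < b -> \forall s \near 0^'+, s ^+ 2 * a <= b.
Proof.
move=> b0; near=> s.
have s0 : 0 < s by near: s; exact: nbhs_right_gt.
have s1 : s < 1 by near: s; exact: nbhs_right_lt.
have sb : s * (`|a| + 1) < b.
  by rewrite -ltr_pdivlMr ?ltr_wpDl //; near: s; apply: nbhs_right_lt;
    rewrite divr_gt0 ?ltr_wpDl.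
have : s ^+ 2 <= s by rewrite expr2 ger_pMl // ltW.
have : a <= `|a| := ler_norm a.
have : 0 <= `|a| := normr_ge0 a.
nra.
Unshelve. all: by end_near.
Qed.

End NearZero.

Section SmoothedProx.
Variables (R : realType) (d : nat) (p : 'rV[R]_d -> R) (tau : R) (y x0 : 'rV[R]_d).
Hypotheses (p_gt0 : forall x, 0 < p x) (p_cont : continuous p).
Hypotheses (p_lc : log_concave p) (tau_gt0 : 0 < tau).
Hypothesis x0_min : is_argmin (prox_obj p tau y) x0.

Let g := tau^-1 *: (x0 - y).
Let p_ge0 x : 0 <= p x := ltW (p_gt0 x).

Let p_le_supergrad z : p z <= p x0 * expR (dot g (z - x0)).
Proof.
rewrite -[p z]lnK ?posrE // -[p x0]lnK ?posrE // -expRD ler_expR.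
exact: prox_log_concave_supergrad.
Qed.

Let iint_smoothed_le s x : 0 < s ->
  (iint (fun z => (p z * gauss_kernel s (x - z))%:E) <=
    (p x0 * expR (dot g (x - x0)) * expR (s ^+ 2 * sqnorm g / 2))%:E)%E.
Proof. by move=> s0; apply: iint_gauss_le; rewrite ?lt0r_neq0. Qed.

Lemma smoothedE s x : 0 < s ->
  (smoothed p s x)%:E = iint (fun z => (p z * gauss_kernel s (x - z))%:E).
Proof.
move=> s0; rewrite /smoothed fineK // ge0_fin_numE.
  exact: le_lt_trans (iint_smoothed_le x s0) (ltry _).
by apply: iint_ge0 => z; rewrite lee_fin mulr_ge0 ?gauss_kernel_ge0.
Qed.

Lemma smoothed_gt0 s x : 0 < s -> 0 < smoothed p s x.
Proof.
move=> s0.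
have [px2 px2_lt] : 0 <= p x / 2 /\ p x / 2 < p x by have := p_gt0 x; lra.
have [r r0 box] := continuous_ge_on_box (@p_cont x) px2_lt.
set c := normal_peak s * expR (- r ^+ 2 / (s ^+ 2 *+ 2)) * (r *+ 2).
have c0 : 0 < c by rewrite !mulr_gt0 ?expR_gt0 ?normal_peak_gt0 ?mulrn_wgt0 ?gt_eqF.
have := iint_gauss_ge (lt0r_neq0 s0) px2 (ltW c0) p_ge0 box
  (fun a => normal_itv_mass_ge_width a (lt0r_neq0 s0) r0).
rewrite -smoothedE // lee_fin; apply: lt_le_trans.
by rewrite mulr_gt0 ?exprn_gt0 ?divr_gt0.
Qed.

Lemma ln_smoothed_le s x : 0 < s ->
  ln (smoothed p s x) <= ln (p x0) + dot g (x - x0) + s ^+ 2 * sqnorm g / 2.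
Proof.
move=> s0.
apply: (@le_trans _ _ (ln (p x0 * expR (dot g (x - x0)) *
                           expR (s ^+ 2 * sqnorm g / 2)))).
  rewrite ler_ln ?posrE ?smoothed_gt0 ?mulr_gt0 ?expR_gt0 //.
  by rewrite -lee_fin smoothedE //; exact: iint_smoothed_le.
by rewrite !lnM ?posrE ?mulr_gt0 ?expR_gt0 // !expRK.
Qed.

Lemma prox_smoothed_sqdist_le s xs : 0 < s ->
  is_argmin (prox_obj (smoothed p s) tau y) xs ->
  2^-1 * sqnorm (xs - x0) <=
    tau * (ln (p x0) - ln (smoothed p s x0)) + tau * (s ^+ 2 * sqnorm g / 2).
Proof.
move=> s0 xs_min; have := xs_min x0; rewrite /prox_obj.
rewrite (_ : y - xs = (y - x0) - (xs - x0)); last first.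
  by apply/rowP => i; rewrite !mxE; ring.
rewrite (sqnormB (y - x0)).
have gD : tau * dot g (xs - x0) = - dot (y - x0) (xs - x0).
  by rewrite dotZl mulrA mulfV ?gt_eqF // mul1r -dotNl opprB.
have := ler_wpM2l (ltW tau_gt0) (ln_smoothed_le xs s0).
rewrite !mulrDr gD; lra.
Qed.

Lemma ln_smoothed_gap_near0 e : 0 < e ->
  \forall s \near 0^'+, ln (p x0) - ln (smoothed p s x0) <= e.
Proof.
move=> e0; set δ := e / d.+1%:R.
have δ0 : 0 < δ by rewrite divr_gt0 ?ltr0n.
have th_lt : p x0 * expR (- δ) < p x0 by rewrite gtr_pMr // expR_lt1 oppr_lt0.
have th0 : 0 <= p x0 * expR (- δ) by rewrite mulr_ge0 ?expR_ge0.
have [r r0 box] := continuous_ge_on_box (@p_cont x0) th_lt.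
have q0 : 0 < 1 - expR (- δ) by rewrite subr_gt0 expR_lt1 oppr_lt0.
near=> s.
have s0 : 0 < s by near: s; exact: nbhs_right_gt.
have tail : 2 * expR (- r ^+ 2 / (s ^+ 2 *+ 2)) <= 1 - expR (- δ).
  by near: s; exact: gauss_tail_near0.
set c := 1 - 2 * expR (- r ^+ 2 / (s ^+ 2 *+ 2)).
have cδ : expR (- δ) <= c by rewrite /c; lra.
have := iint_gauss_ge (lt0r_neq0 s0) th0
  (le_trans (expR_ge0 _) cδ) p_ge0 box
  (fun a => normal_itv_mass_ge_chernoff a (lt0r_neq0 s0) r0).
rewrite -smoothedE // lee_fin => low.
have : p x0 * expR (- e) <= smoothed p s x0.
  apply: le_trans low; rewrite -mulrA ler_wpM2l //.
  rewrite (_ : - e = d.+1%:R * - δ); last by rewrite /δ mulrN mulrC divfK ?pnatr_eq0.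
  rewrite expRM_natl exprS ler_wpM2l ?expR_ge0 // lerXn2r // nnegrE ?expR_ge0 //.
  exact: le_trans (expR_ge0 _) cδ.
rewrite -ler_ln ?posrE ?mulr_gt0 ?expR_gt0 ?smoothed_gt0 // lnM ?posrE ?expR_gt0 //.
rewrite expRK; lra.
Unshelve. all: by end_near.
Qed.

End SmoothedProx.

Theorem lemma4 (R : realType) (d : nat) (p : 'rV[R]_d -> R) (tau : R)
    (y : 'rV[R]_d) (x0 : 'rV[R]_d) (xs : R -> 'rV[R]_d) :
  is_density p ->
  (forall x, 0 < p x) ->
  log_concave p ->
  thrice_differentiable p ->
  (exists M : R, forall x, third_deriv_frob2 (fun z => ln (p z)) x <= M) ->
  0 < tau ->
  is_argmin (prox_obj p tau y) x0 ->
  (forall sigma, 0 < sigma -> is_argmin (prox_obj (smoothed p sigma) tau y) (xs sigma)) ->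
  xs sigma @[sigma --> 0^'+] --> x0.
Proof.
move=> _ p_gt0 p_lc [p_diff _ _] _ tau_gt0 x0_min xs_min.
have p_cont : continuous p by move=> x; exact: differentiable_continuous.
apply: cvg_rV_sqnorm => e e0.
have e8 : 0 < e / (8 * tau) by rewrite divr_gt0 ?mulr_gt0.
near=> s.
have s0 : 0 < s by near: s; exact: nbhs_right_gt.
have gap : ln (p x0) - ln (smoothed p s x0) <= e / (8 * tau).
  by near: s; exact: (ln_smoothed_gap_near0 p_gt0 p_cont p_lc tau_gt0 x0_min e8).
have var : s ^+ 2 * (sqnorm (tau^-1 *: (x0 - y)) / 2) <= e / (8 * tau).
  by near: s; exact: sqr_mul_le_near0.
have := prox_smoothed_sqdist_le p_gt0 p_cont p_lc tau_gt0 x0_min s0 (xs_min s s0).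
have tau8 : tau * (e / (8 * tau)) = e / 8 by field; rewrite gt_eqF.
rewrite mulrA in var.
move: (ler_wpM2l (ltW tau_gt0) gap) (ler_wpM2l (ltW tau_gt0) var).
rewrite tau8; lra.
Unshelve. all: by end_near.
Qed.
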